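(* For every real constant $\alpha$, there exist a conjunctive query $Q$, a set of functional dependencies on its relations, and a database $D$ satisfying these dependencies, such that $|Q(D)| > \mathrm{rmax}(Q,D)^{\alpha\, C(chase(Q))}$.
   Context: A conjunctive query has the form $Q = R_0(u_0)\leftarrow A_1\wedge\cdots\wedge A_m$, body atoms $A_i=R_{j(i)}(u_i)$ with variable lists $u_i$; $Q(D)$ is the set of $\theta(u_0)$ over all assignments $\theta$ of universe elements to variables with $\theta(u_i)\in R_{j(i)}^D$ for all $i\ge1$; $\mathrm{rmax}(Q,D)$ is the size of the largest relation among those named in the body. A functional dependency $V\to a$ on relation $R$ is satisfied if tuples of $R^D$ agreeing on positions $V$ agree on position $a$; it induces for each atom $R(u)$ the dependency $\{u[p]:p\in V\}\to u[a]$ among query variables. $chase(Q)$ is the query obtained by the standard chase procedure (repeatedly identifying variables forced equal by the FDs among atoms of the same relation and removing duplicate atoms); it returns the same answer as $Q$ on every database satisfying the FDs. Valid coloring: a map $\mathcal{L}$ assigning to each query variable $X$ a finite set $\mathcal{L}(X)$ of colors such that for every induced dependency $X_1,\ldots,X_j\to Y$, $\mathcal{L}(Y)\subseteq\bigcup_i\mathcal{L}(X_i)$. Color number: $C(Q)=\max_{\mathcal{L}} \frac{|\bigcup_{X\in u_0}\mathcal{L}(X)|}{\max_{i\ge1}|\bigcup_{X\in u_i}\mathcal{L}(X)|}$, the maximum over valid colorings with positive denominator. *)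

From Stdlib Require Import Reals List Arith Relations.
Import ListNotations.
Open Scope R_scope.

(* Query variables, relation names and universe elements are all nat. *)
Record atom := mkAtom { rel : nat; args : list nat }.
Record cq := mkCQ { head : list nat; body : list atom }.   (* R0(head) <- body *)
Definition database := nat -> list (list nat).
(* functional dependency  fd_lhs -> fd_rhs  (positions) on relation fd_rel *)
Record fd := mkFD { fd_rel : nat; fd_lhs : list nat; fd_rhs : nat }.

Definition atom_eq_dec : forall a b : atom, {a = b} + {a <> b}.
Proof. decide equality; first [apply (list_eq_dec Nat.eq_dec) | apply Nat.eq_dec]. Defined.

Definition wf_query (ar : nat -> nat) (Q : cq) : Prop :=
  forall A, In A (body Q) -> length (args A) = ar (rel A).
Definition wf_db (ar : nat -> nat) (D : database) : Prop :=
  forall R t, In t (D R) -> length t = ar R.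
Definition wf_fd (ar : nat -> nat) (f : fd) : Prop :=
  (forall p, In p (fd_lhs f) -> (p < ar (fd_rel f))%nat) /\ (fd_rhs f < ar (fd_rel f))%nat.

Definition fd_sat (D : database) (f : fd) : Prop :=
  forall t t', In t (D (fd_rel f)) -> In t' (D (fd_rel f)) ->
    (forall p, In p (fd_lhs f) -> nth p t 0%nat = nth p t' 0%nat) ->
    nth (fd_rhs f) t 0%nat = nth (fd_rhs f) t' 0%nat.

Definition in_answer (Q : cq) (D : database) (t : list nat) : Prop :=
  exists theta : nat -> nat,
    (forall A, In A (body Q) -> In (map theta (args A)) (D (rel A))) /\
    t = map theta (head Q).
Definition answer_card (Q : cq) (D : database) (n : nat) : Prop :=
  exists ans : list (list nat), NoDup ans /\
    (forall t, In t ans <-> in_answer Q D t) /\ length ans = n.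

Definition rel_size (D : database) (R : nat) : nat :=
  length (nodup (list_eq_dec Nat.eq_dec) (D R)).
Definition rmax (Q : cq) (D : database) : nat :=
  fold_right max 0%nat (map (fun A => rel_size D (rel A)) (body Q)).

Definition induced (S : list fd) (Q : cq) (X : list nat) (Y : nat) : Prop :=
  exists f A, In f S /\ In A (body Q) /\ rel A = fd_rel f /\
    X = map (fun p => nth p (args A) 0%nat) (fd_lhs f) /\
    Y = nth (fd_rhs f) (args A) 0%nat.

(* colorings: each variable gets a finite set (list) of colors (nat) *)
Definition coloring := nat -> list nat.
Definition valid_coloring (S : list fd) (Q : cq) (L : coloring) : Prop :=
  forall X Y, induced S Q X Y ->
    forall c, In c (L Y) -> exists x, In x X /\ In c (L x).
Definition ncolors (L : coloring) (vars : list nat) : nat :=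
  length (nodup Nat.eq_dec (flat_map L vars)).
Definition denom (L : coloring) (Q : cq) : nat :=
  fold_right max 0%nat (map (fun A => ncolors L (args A)) (body Q)).
Definition ratio (L : coloring) (Q : cq) : R :=
  INR (ncolors L (head Q)) / INR (denom L Q).
Definition color_number (S : list fd) (Q : cq) (c : R) : Prop :=
  (exists L, valid_coloring S Q L /\ (0 < denom L Q)%nat /\ ratio L Q = c) /\
  (forall L, valid_coloring S Q L -> (0 < denom L Q)%nat -> ratio L Q <= c).

Definition subst_var (x y v : nat) : nat := if Nat.eq_dec v x then y else v.
Definition subst_atom (x y : nat) (A : atom) : atom :=
  mkAtom (rel A) (map (subst_var x y) (args A)).
Definition subst_query (x y : nat) (Q : cq) : cq :=
  mkCQ (map (subst_var x y) (head Q))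
       (nodup atom_eq_dec (map (subst_atom x y) (body Q))).
Definition chase_step (S : list fd) (Q Q' : cq) : Prop :=
  exists f A1 A2, In f S /\ In A1 (body Q) /\ In A2 (body Q) /\
    rel A1 = fd_rel f /\ rel A2 = fd_rel f /\
    (forall p, In p (fd_lhs f) -> nth p (args A1) 0%nat = nth p (args A2) 0%nat) /\
    nth (fd_rhs f) (args A2) 0%nat <> nth (fd_rhs f) (args A1) 0%nat /\
    Q' = subst_query (nth (fd_rhs f) (args A2) 0%nat) (nth (fd_rhs f) (args A1) 0%nat) Q.
Definition is_chase (S : list fd) (Q Q' : cq) : Prop :=
  clos_refl_trans cq (chase_step S) Q Q' /\ ~ (exists Q'', chase_step S Q' Q'').

(* The witnesses are the XOR queries Q_k.  The variables x_v of Q_k are indexed by the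
   nonzero vectors v of F_2^k, the body contains R(x_u, x_v, x_{u+v}) for all distinct
   nonzero u, v, the head lists the variables of the unit vectors, and R carries the
   functional dependency {1,2} -> 3.  In the database D, R is the graph {(a, b, a xor b)}
   of xor on {0,1}, so D satisfies the dependency and rmax(Q_k, D) = 4.  Then:
   - Q_k is already chased: atoms agreeing on their first two positions coincide;
   - Q_k(D) has 2^k answers, one for each linear functional x_v |-> <v,s>;
   - C(Q_k) <= 4/3: double counting colour/atom incidences shows that every valid colouring
     has ratio at most 4(2^k - 1)/(3 * 2^k), because the vectors whose label misses a fixed
     head colour form, with 0, a proper subspace; the colouring x_v |-> {s | <v,s> = 1}
     attains this value, so the maximum defining C(Q_k) exists.
   Since C(Q_k) stays in [0, 4/3] while |Q_k(D)| = 2^k grows, |Q_k(D)| > 4^(alpha C(Q_k))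
   once k is large. *)

From Pilot Require Import Defs.
From Stdlib Require Import Reals List Lia Bool Lra Relations FinFun.
Import ListNotations.
Local Open Scope nat_scope.

Lemma filter_length_b2n {A} (f : A -> bool) (l : list A) :
  length (filter f l) = list_sum (map (fun x => Nat.b2n (f x)) l).
Proof. induction l as [|x l IH]; simpl; [reflexivity|]. destruct (f x); simpl; lia. Qed.

Lemma filter_length_relation {A} (f g h j : A -> bool) (l : list A) :
  (forall x, 2 * Nat.b2n (f x) = Nat.b2n (g x) + Nat.b2n (h x) + Nat.b2n (j x)) ->
  2 * length (filter f l) =
  length (filter g l) + length (filter h l) + length (filter j l).
Proof.
  intros Hx. rewrite !filter_length_b2n.
  induction l as [|x l IH]; simpl; [reflexivity|]. specialize (Hx x). lia.
Qed.

Lemma filter_length_const {A} (b : bool) (l : list A) :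
  length (filter (fun _ => b) l) = if b then length l else 0.
Proof. destruct b; induction l; simpl; auto. Qed.

Lemma list_sum_map_le {A} (f g : A -> nat) (l : list A) :
  (forall x, In x l -> f x <= g x) -> list_sum (map f l) <= list_sum (map g l).
Proof.
  induction l as [|x l IH]; simpl; intros H; [lia|].
  specialize (H x (or_introl eq_refl)) as Hx. specialize (IH (fun y Hy => H y (or_intror Hy))). lia.
Qed.

Lemma list_sum_map_const {A} (c : nat) (l : list A) :
  list_sum (map (fun _ => c) l) = c * length l.
Proof. induction l; simpl; lia. Qed.

Lemma double_counting {X Y} (B : list X) (G : list Y) (R : X -> Y -> bool) :
  list_sum (map (fun A => length (filter (R A) G)) B) =
  list_sum (map (fun g => length (filter (fun A => R A g) B)) G).
Proof.
  induction B as [|A B IH]; simpl.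
  - induction G; simpl; auto.
  - rewrite IH, filter_length_b2n. clear IH.
    induction G as [|g G IHG]; simpl; [reflexivity|]. destruct (R A g); simpl; lia.
Qed.

Lemma fold_max_ge (x : nat) (l : list nat) : In x l -> x <= fold_right max 0 l.
Proof. induction l; simpl; intros H; [tauto|]. destruct H as [->|H]; [lia|]. specialize (IHl H). lia. Qed.

Lemma fold_max_le (c : nat) (l : list nat) : (forall x, In x l -> x <= c) -> fold_right max 0 l <= c.
Proof.
  induction l as [|x l IH]; simpl; intros H; [lia|].
  specialize (H x (or_introl eq_refl)) as Hx. specialize (IH (fun y Hy => H y (or_intror Hy))). lia.
Qed.

Lemma list_sum_map_indicator {A} (f : A -> bool) (c : nat) (l : list A) :
  list_sum (map (fun x => if f x then c else 0) l) = c * length (filter f l).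
Proof. induction l as [|x l IH]; simpl; [lia|]. destruct (f x); simpl; lia. Qed.

Lemma filter_flat_map {A B} (f : B -> bool) (r : A -> list B) (l : list A) :
  filter f (flat_map r l) = flat_map (fun x => filter f (r x)) l.
Proof. induction l as [|x l IH]; simpl; [reflexivity|]. rewrite filter_app, IH. reflexivity. Qed.

Lemma list_sum_map_scale {A} (c : nat) (f : A -> nat) (l : list A) :
  list_sum (map (fun x => c * f x) l) = c * list_sum (map f l).
Proof. induction l as [|x l IH]; simpl; lia. Qed.

(* Vectors of F_2^k as boolean lists of length k, with addition, the standard
   inner product, and an injective encoding into nat (used to name query variables). *)

Fixpoint vectors (k : nat) : list (list bool) :=
  match k with
  | 0 => [[]]
  | S k => map (cons false) (vectors k) ++ map (cons true) (vectors k)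
  end.

Fixpoint vadd (u v : list bool) : list bool :=
  match u, v with a :: u', b :: v' => xorb a b :: vadd u' v' | _, _ => [] end.

Fixpoint dot (u s : list bool) : bool :=
  match u, s with a :: u', b :: s' => xorb (a && b) (dot u' s') | _, _ => false end.

Definition nonzero (u : list bool) : bool := existsb (fun b => b) u.

Fixpoint unit_vectors (k : nat) : list (list bool) :=
  match k with
  | 0 => []
  | S k => (true :: repeat false k) :: map (cons false) (unit_vectors k)
  end.

Fixpoint enc (u : list bool) : nat :=
  match u with [] => 0 | b :: u' => Nat.b2n b + 2 * enc u' end.

Fixpoint dec (k x : nat) : list bool :=
  match k with 0 => [] | S k => Nat.testbit x 0 :: dec k (x / 2) end.

Lemma dec_enc (k : nat) (u : list bool) : length u = k -> dec k (enc u) = u.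
Proof.
  intros <-. induction u as [|b u IH]; [reflexivity|]. cbn [length dec enc].
  rewrite Nat.add_b2n_double_bit0, Nat.add_b2n_double_div2, IH. reflexivity.
Qed.

Lemma enc_inj (u v : list bool) : length u = length v -> enc u = enc v -> u = v.
Proof. intros Hl He. rewrite <- (dec_enc _ u eq_refl), <- (dec_enc _ v eq_refl), Hl, He. reflexivity. Qed.

Lemma vectors_In (k : nat) (v : list bool) : In v (vectors k) <-> length v = k.
Proof.
  revert v. induction k as [|k IH]; intros v; simpl.
  - split; [intros [<-|[]]; reflexivity | destruct v; simpl; [auto | discriminate]].
  - rewrite in_app_iff, !in_map_iff. split.
    + intros [[w [<- Hw]]|[w [<- Hw]]]; simpl; f_equal; apply IH; exact Hw.
    + destruct v as [|b w]; simpl; [discriminate|]. intros [= Hw].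
      destruct b; [right|left]; exists w; split; auto; apply IH; exact Hw.
Qed.

Lemma vectors_NoDup (k : nat) : NoDup (vectors k).
Proof.
  induction k as [|k IH]; simpl; [repeat constructor; auto|].
  apply NoDup_app; try (apply Injective_map_NoDup; [intros a b [= ?]; assumption | exact IH]).
  intros a Ha Hb. apply in_map_iff in Ha as [x [<- _]], Hb as [y [[=] _]].
Qed.

Lemma vectors_length (k : nat) : length (vectors k) = 2 ^ k.
Proof. induction k; simpl; auto. rewrite length_app, !length_map, IHk. lia. Qed.

Lemma vadd_length (u v : list bool) : length u = length v -> length (vadd u v) = length u.
Proof. revert v; induction u; intros [|b v] H; simpl in *; try discriminate; auto. Qed.

Lemma vadd_comm (u v : list bool) : vadd u v = vadd v u.
Proof. revert v; induction u; intros [|b v]; simpl; auto. rewrite IHu, xorb_comm; auto. Qed.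

Lemma vadd_cancel (u v : list bool) : length u = length v -> vadd u (vadd u v) = v.
Proof.
  revert v; induction u as [|a u IH]; intros [|b v] H; simpl in *; try discriminate; auto.
  rewrite IH by lia. destruct a, b; reflexivity.
Qed.

Lemma vadd_zero_eq (u v : list bool) :
  length u = length v -> nonzero (vadd u v) = false -> u = v.
Proof.
  revert v; induction u as [|a u IH]; intros [|b v] H; simpl in *; try discriminate; auto.
  intros [H1 H2]%orb_false_iff. rewrite (IH v) by (auto; lia).
  destruct a, b; simpl in H1; congruence.
Qed.

Lemma nonzero_vadd (u v : list bool) :
  length u = length v -> u <> v -> nonzero (vadd u v) = true.
Proof.
  intros Hl Huv. destruct (nonzero (vadd u v)) eqn:E; [reflexivity|].
  exfalso. exact (Huv (vadd_zero_eq u v Hl E)).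
Qed.

Lemma vadd_nonzero_neq (u v : list bool) :
  length u = length v -> nonzero v = true -> vadd u v <> u.
Proof.
  revert v; induction u as [|a u IH]; intros [|b v] Hl H; simpl in *; try discriminate.
  intros [= E1 E2]. apply orb_true_iff in H as [->|H].
  - destruct a; discriminate.
  - exact (IH v ltac:(lia) H E2).
Qed.

Lemma dot_vadd (u v s : list bool) :
  length u = length v -> dot (vadd u v) s = xorb (dot u s) (dot v s).
Proof.
  revert v s; induction u as [|a u IH]; intros [|b v] s H; simpl in *; try discriminate; auto.
  destruct s as [|c s]; simpl; auto. rewrite IH by lia.
  destruct a, b, c, (dot u s), (dot v s); reflexivity.
Qed.

Lemma dot_zero (u s : list bool) : nonzero u = false -> dot u s = false.
Proof.
  revert s; induction u as [|a u IH]; intros [|c s] H; simpl in *; auto.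
  apply orb_false_iff in H as [-> H]. simpl. auto.
Qed.

Lemma unit_vectors_prop (k : nat) (e : list bool) :
  In e (unit_vectors k) -> length e = k /\ nonzero e = true.
Proof.
  revert e; induction k as [|k IH]; simpl; intros e H; [tauto|]. destruct H as [<-|H].
  - simpl. rewrite repeat_length. auto.
  - apply in_map_iff in H as [e' [<- H]]. apply IH in H as [Hl He]. simpl. auto.
Qed.

Lemma dot_unit_vectors (k : nat) (s : list bool) :
  length s = k -> map (fun e => dot e s) (unit_vectors k) = s.
Proof.
  revert s; induction k as [|k IH]; intros [|b s] H; simpl in *; try discriminate; auto.
  rewrite dot_zero by (clear; induction k; auto). rewrite map_map. simpl.
  f_equal; [destruct b; reflexivity | apply IH; lia].
Qed.

Lemma dot_balanced (u : list bool) (b : bool) :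
  nonzero u = true ->
  length (filter (fun s => xorb b (dot u s)) (vectors (length u))) = 2 ^ (length u - 1).
Proof.
  revert b; induction u as [|a u IH]; intros b Hu; [discriminate|].
  cbn [vectors length]. rewrite filter_app, length_app, !filter_map_swap, !length_map.
  rewrite (filter_ext (fun s => xorb b (dot (a :: u) (false :: s))) (fun s => xorb b (dot u s)))
    by (intros s; simpl; rewrite andb_false_r; reflexivity).
  rewrite (filter_ext (fun s => xorb b (dot (a :: u) (true :: s)))
             (fun s => xorb (xorb b a) (dot u s)))
    by (intros s; simpl; rewrite andb_true_r, xorb_assoc; reflexivity).
  destruct (nonzero u) eqn:Hu'.
  - rewrite !IH by reflexivity.
    assert (length u <> 0) by (destruct u; [discriminate Hu' | discriminate]).
    replace (length u) with (S (length u - 1)) at 3 by lia. simpl. lia.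
  - assert (a = true) as -> by (simpl in Hu; rewrite Hu', orb_false_r in Hu; exact Hu).
    assert (Hconst : forall c, filter (fun s => xorb c (dot u s)) (vectors (length u)) =
                               filter (fun _ => xorb c false) (vectors (length u)))
      by (intros c; apply filter_ext; intros s; rewrite dot_zero; auto).
    rewrite !Hconst, !filter_length_const, vectors_length. simpl. rewrite Nat.sub_0_r.
    destruct b; simpl; lia.
Qed.

(* For distinct nonzero u, v the functionals <u,.> and <v,.> are jointly nonzero on
   3/4 of F_2^n, since 2[x \/ y] = [x] + [y] + [x xor y]. *)
Lemma dot_or_count (u v : list bool) :
  length u = length v -> nonzero u = true -> nonzero v = true -> u <> v ->
  length (filter (fun s => dot u s || dot v s) (vectors (length u))) = 3 * 2 ^ (length u - 2).
Proof.
  intros Hl Hu Hv Huv.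
  pose proof (nonzero_vadd u v Hl Huv) as Hw.
  assert (Hlen : 2 <= length u).
  { destruct u as [|a [|c u]], v as [|a' [|c' v]]; simpl in *; try discriminate; try lia.
    destruct a, a'; simpl in *; congruence. }
  pose proof (dot_balanced u false Hu) as Cu.
  pose proof (dot_balanced v false Hv) as Cv.
  pose proof (dot_balanced _ false Hw) as Cw.
  rewrite <- Hl in Cv. rewrite vadd_length in Cw by exact Hl.
  assert (Hind : forall s, 2 * Nat.b2n (dot u s || dot v s) =
                          Nat.b2n (dot u s) + Nat.b2n (dot v s) + Nat.b2n (dot (vadd u v) s))
    by (intros s; rewrite dot_vadd by exact Hl; destruct (dot u s), (dot v s); reflexivity).
  pose proof (filter_length_relation _ (fun s => dot u s) (fun s => dot v s)
                (fun s => dot (vadd u v) s) (vectors (length u)) Hind) as Rel.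
  simpl in Cu, Cv, Cw. rewrite Cu, Cv, Cw in Rel.
  replace (length u - 1) with (S (length u - 2)) in Rel by lia. simpl in Rel. lia.
Qed.

Definition neqb (u v : list bool) : bool := if list_eq_dec bool_dec u v then false else true.

Lemma neqb_true (u v : list bool) : neqb u v = true <-> u <> v.
Proof. unfold neqb. destruct (list_eq_dec bool_dec u v); split; congruence. Qed.

Lemma filter_neqb_length (u : list bool) (l : list (list bool)) :
  NoDup l -> In u l -> length (filter (neqb u) l) = length l - 1.
Proof.
  intros ND. induction ND as [|x l Hx ND IH]; simpl; [tauto|]. intros [->|H].
  - unfold neqb at 1. destruct (list_eq_dec bool_dec u u) as [_|]; [|congruence].
    rewrite Nat.sub_0_r, (filter_ext_in _ (fun _ => true)), filter_length_const; [reflexivity|].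
    intros v Hv. apply neqb_true. congruence.
  - assert (neqb u x = true) as -> by (apply neqb_true; congruence).
    simpl. rewrite IH by exact H. destruct l; simpl in *; [tauto|lia].
Qed.

Definition nonzero_vectors (k : nat) : list (list bool) := filter nonzero (vectors k).

Lemma nonzero_vectors_In (k : nat) (u : list bool) :
  In u (nonzero_vectors k) <-> length u = k /\ nonzero u = true.
Proof. unfold nonzero_vectors. rewrite filter_In, vectors_In. reflexivity. Qed.

Lemma nonzero_vectors_NoDup (k : nat) : NoDup (nonzero_vectors k).
Proof. apply NoDup_filter, vectors_NoDup. Qed.

Lemma nonzero_vectors_length (k : nat) : length (nonzero_vectors k) = 2 ^ k - 1.
Proof.
  unfold nonzero_vectors. induction k as [|k IH]; simpl; [reflexivity|].
  rewrite filter_app, length_app, !filter_map_swap, !length_map.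
  rewrite (filter_ext (fun v => nonzero (false :: v)) nonzero) by reflexivity.
  rewrite (filter_ext (fun v => nonzero (true :: v)) (fun _ => true)) by reflexivity.
  rewrite filter_length_const, vectors_length, IH. pose proof (Nat.pow_nonzero 2 k). lia.
Qed.

(* The XOR query Q_k: a variable x_v (named enc v) for every nonzero v in F_2^k, an atom
   R(x_u, x_v, x_{u+v}) for all distinct nonzero u, v, and the unit-vector variables as head. *)
Definition xor_atom (u v : list bool) : atom := mkAtom 0 [enc u; enc v; enc (vadd u v)].

Definition xor_row (k : nat) (u : list bool) : list atom :=
  map (xor_atom u) (filter (neqb u) (nonzero_vectors k)).

Definition xor_query (k : nat) : cq :=
  mkCQ (map enc (unit_vectors k)) (flat_map (xor_row k) (nonzero_vectors k)).

Definition xor_fd : fd := mkFD 0 [0; 1] 2.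

Definition xor_db : database := fun R =>
  match R with 0 => [[0; 0; 0]; [0; 1; 1]; [1; 0; 1]; [1; 1; 0]] | _ => [] end.

Lemma xor_body_In (k : nat) (u v : list bool) :
  In u (nonzero_vectors k) -> In v (nonzero_vectors k) -> u <> v ->
  In (xor_atom u v) (body (xor_query k)).
Proof.
  intros Hu Hv Huv. apply in_flat_map. exists u. split; [exact Hu|].
  apply in_map, filter_In. split; [exact Hv | apply neqb_true, Huv].
Qed.

Lemma xor_body_inv (k : nat) (A : atom) :
  In A (body (xor_query k)) -> exists u v,
    In u (nonzero_vectors k) /\ In v (nonzero_vectors k) /\ u <> v /\ A = xor_atom u v.
Proof.
  intros H. apply in_flat_map in H as [u [Hu H]]. apply in_map_iff in H as [v [<- Hv]].
  apply filter_In in Hv as [Hv Huv%neqb_true]. exists u, v. auto.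
Qed.

Lemma xor_body_length (k : nat) :
  length (body (xor_query k)) = (2 ^ k - 1) * (2 ^ k - 1 - 1).
Proof.
  simpl. rewrite (flat_map_constant_length (c := 2 ^ k - 1 - 1)), nonzero_vectors_length;
    [reflexivity|].
  intros u Hu. unfold xor_row.
  rewrite length_map, filter_neqb_length, nonzero_vectors_length;
    auto using nonzero_vectors_NoDup.
Qed.

Lemma other_nonzero_vector (k : nat) (e : list bool) :
  2 <= k -> In e (nonzero_vectors k) -> exists v, In v (nonzero_vectors k) /\ e <> v.
Proof.
  intros Hk He.
  pose proof (filter_neqb_length e _ (nonzero_vectors_NoDup k) He) as L.
  rewrite nonzero_vectors_length in L.
  assert (2 ^ 2 <= 2 ^ k) by (apply Nat.pow_le_mono_r; lia). simpl in *.
  destruct (filter (neqb e) (nonzero_vectors k)) as [|v l] eqn:E; simpl in L; [lia|].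
  assert (Hv : In v (filter (neqb e) (nonzero_vectors k))) by (rewrite E; left; reflexivity).
  apply filter_In in Hv as [Hv He'%neqb_true]. eauto.
Qed.

Lemma xor_query_wf (k : nat) : wf_query (fun _ => 3) (xor_query k).
Proof. intros A HA. apply xor_body_inv in HA as [u [v [_ [_ [_ ->]]]]]. reflexivity. Qed.

Lemma xor_db_wf : wf_db (fun _ => 3) xor_db.
Proof. intros [|R] t Ht; simpl in Ht; [|tauto]. repeat destruct Ht as [<-|Ht]; easy. Qed.

Lemma xor_fd_wf : wf_fd (fun _ => 3) xor_fd.
Proof. split; simpl; [intros p [<-|[<-|[]]]|]; lia. Qed.

Lemma xor_db_sat : fd_sat xor_db xor_fd.
Proof.
  intros t t' Ht Ht' H. simpl in Ht, Ht'.
  pose proof (H 0 (or_introl eq_refl)) as H0. pose proof (H 1 (or_intror (or_introl eq_refl))) as H1.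
  repeat destruct Ht as [<-|Ht]; repeat destruct Ht' as [<-|Ht']; simpl in *; easy.
Qed.

(* Two atoms of Q_k agreeing on the first two positions are equal, so no chase step applies. *)
Lemma xor_query_chased (k : nat) : ~ (exists Q', chase_step [xor_fd] (xor_query k) Q').
Proof.
  intros [Q' [f [A1 [A2 [[<-|[]] [H1 [H2 [_ [_ [Hlhs [Hne _]]]]]]]]]]].
  apply xor_body_inv in H1 as [u1 [v1 [Hu1 [Hv1 [_ ->]]]]].
  apply xor_body_inv in H2 as [u2 [v2 [Hu2 [Hv2 [_ ->]]]]].
  apply nonzero_vectors_In in Hu1, Hv1, Hu2, Hv2.
  pose proof (Hlhs 0 (or_introl eq_refl)) as E0.
  pose proof (Hlhs 1 (or_intror (or_introl eq_refl))) as E1. simpl in E0, E1, Hne.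
  apply enc_inj in E0; [|lia]. apply enc_inj in E1; [|lia]. subst. auto.
Qed.

Lemma linear_assignment_sat (k : nat) (s : list bool) (A : atom) :
  In A (body (xor_query k)) ->
  In (map (fun x => Nat.b2n (dot (dec k x) s)) (args A)) (xor_db (rel A)).
Proof.
  intros HA. apply xor_body_inv in HA as [u [v [Hu [Hv [_ ->]]]]].
  apply nonzero_vectors_In in Hu as [Hu _], Hv as [Hv _]. simpl.
  rewrite !dec_enc by (try rewrite vadd_length; lia).
  rewrite dot_vadd by lia. destruct (dot u s), (dot v s); simpl; tauto.
Qed.

Lemma b2n_retract (s : list bool) : map (fun n => Nat.eqb n 1) (map Nat.b2n s) = s.
Proof. induction s as [|[] s IH]; simpl; f_equal; exact IH. Qed.

Lemma xor_answers (k : nat) : 2 <= k -> answer_card (xor_query k) xor_db (2 ^ k).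
Proof.
  intros Hk. exists (map (map Nat.b2n) (vectors k)). split; [|split].
  - apply Injective_map_NoDup; [|apply vectors_NoDup].
    intros x y E. rewrite <- (b2n_retract x), <- (b2n_retract y), E. reflexivity.
  - intros t. rewrite in_map_iff. split.
    + intros [s [<- Hs]]. apply vectors_In in Hs.
      exists (fun x => Nat.b2n (dot (dec k x) s)). split; [apply linear_assignment_sat|].
      simpl. rewrite <- (dot_unit_vectors k s Hs) at 1. rewrite !map_map.
      apply map_ext_in. intros e He. apply unit_vectors_prop in He as [He _].
      rewrite dec_enc by exact He. reflexivity.
    + intros [theta [Hsat ->]].
      assert (Hbit : forall e, In e (unit_vectors k) -> theta (enc e) <= 1).
      { intros e He. pose proof (unit_vectors_prop k e He) as HeV.
        apply nonzero_vectors_In in HeV.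
        destruct (other_nonzero_vector k e Hk HeV) as [v [Hv Hne]].
        pose proof (Hsat _ (xor_body_In k e v HeV Hv Hne)) as Ht. simpl in Ht.
        repeat destruct Ht as [[= <- _ _]|Ht]; lia. }
      exists (map (fun e => Nat.eqb (theta (enc e)) 1) (unit_vectors k)). split.
      * simpl. rewrite !map_map. apply map_ext_in. intros e He.
        specialize (Hbit e He). destruct (theta (enc e)) as [|[|]]; simpl; lia.
      * apply vectors_In. rewrite length_map.
        clear. induction k; simpl; rewrite ?length_map; auto.
  - rewrite length_map, vectors_length. reflexivity.
Qed.

Lemma fold_max_const {A} (f : A -> nat) (c : nat) (l : list A) :
  l <> [] -> (forall x, In x l -> f x = c) -> fold_right max 0 (map f l) = c.
Proof.
  induction l as [|x l IH]; intros Hl H; [congruence|]. cbn [map fold_right].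
  rewrite H by (left; reflexivity). destruct l as [|y l]; [simpl; lia|].
  rewrite IH; [lia | discriminate | intros; apply H; right; auto].
Qed.

Lemma xor_rmax (k : nat) : 2 <= k -> rmax (xor_query k) xor_db = 4.
Proof.
  intros Hk. apply fold_max_const.
  - assert (He : In (true :: repeat false (k - 1)) (nonzero_vectors k)).
    { apply nonzero_vectors_In. simpl. rewrite repeat_length. split; [lia | reflexivity]. }
    destruct (other_nonzero_vector k _ Hk He) as [v [Hv Hne]].
    intros E. pose proof (xor_body_In k _ v He Hv Hne) as H. rewrite E in H. exact H.
  - intros A HA. apply xor_body_inv in HA as [u [v [_ [_ [_ ->]]]]]. reflexivity.
Qed.

Definition inb (g : nat) (l : list nat) : bool := if in_dec Nat.eq_dec g l then true else false.

Lemma inb_true (g : nat) (l : list nat) : inb g l = true <-> In g l.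
Proof. unfold inb. destruct (in_dec Nat.eq_dec g l); split; congruence || tauto. Qed.

Definition atom_colours (L : coloring) (A : atom) : list nat := nodup Nat.eq_dec (flat_map L (args A)).

Lemma atom_colours_xor (L : coloring) (u v : list bool) (g : nat) :
  In g (atom_colours L (xor_atom u v)) <->
  In g (L (enc u)) \/ In g (L (enc v)) \/ In g (L (enc (vadd u v))).
Proof. unfold atom_colours. rewrite nodup_In. simpl. rewrite !in_app_iff. simpl. tauto. Qed.

Section ValidColouring.

Variable k : nat.
Variable L : coloring.
Hypothesis L_valid : valid_coloring [xor_fd] (xor_query k) L.
Hypothesis k_ge_2 : 2 <= k.

Let M : nat := 2 ^ k - 1.
Let V : list (list bool) := nonzero_vectors k.
Let carries (g : nat) (v : list bool) : bool := inb g (L (enc v)).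

Lemma nonzero_count_ge_3 : 3 <= M.
Proof. unfold M. pose proof (Nat.pow_le_mono_r 2 2 k ltac:(lia) k_ge_2). simpl in *. lia. Qed.

Lemma valid_vadd (u v : list bool) (g : nat) :
  In u V -> In v V -> u <> v -> In g (L (enc (vadd u v))) ->
  In g (L (enc u)) \/ In g (L (enc v)).
Proof.
  intros Hu Hv Huv Hg.
  destruct (L_valid [enc u; enc v] (enc (vadd u v))) with (c := g) as [x [Hx Hgx]]; auto.
  - exists xor_fd, (xor_atom u v). repeat split; simpl; auto. apply xor_body_In; auto.
  - simpl in Hx. destruct Hx as [<-|[<-|[]]]; auto.
Qed.

(* The vectors not carrying g are closed under addition (they form a subspace with 0).
   Hence if x0 carries g and c does not, then x0 + c carries g, since x0 = c + (x0 + c). *)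
Lemma translate_carries (g : nat) (x0 c : list bool) :
  In x0 V -> carries g x0 = true -> In c V -> carries g c = false ->
  In (vadd x0 c) V /\ carries g (vadd x0 c) = true.
Proof.
  intros Hx0 Hg Hc Hcg.
  pose proof Hx0 as [Hlx0 Hnx0]%nonzero_vectors_In. pose proof Hc as [Hlc _]%nonzero_vectors_In.
  assert (Hcx : c <> x0) by (intros ->; congruence).
  assert (Hw : In (vadd x0 c) V)
    by (apply nonzero_vectors_In; rewrite vadd_length by lia;
        split; [lia | apply nonzero_vadd; auto; lia]).
  split; [exact Hw|]. destruct (carries g (vadd x0 c)) eqn:E; [reflexivity|]. exfalso.
  assert (Hne : c <> vadd x0 c)
    by (intros E2; apply (vadd_nonzero_neq c x0 ltac:(lia) Hnx0);
        rewrite vadd_comm; symmetry; exact E2).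
  assert (Hsum : vadd c (vadd x0 c) = x0)
    by (rewrite (vadd_comm x0 c), vadd_cancel by lia; reflexivity).
  apply inb_true in Hg. rewrite <- Hsum in Hg.
  destruct (valid_vadd c (vadd x0 c) g Hc Hw Hne Hg) as [H1|H1];
    apply inb_true in H1; unfold carries in *; congruence.
Qed.

(* If x0 carries g, translation by x0 injects the vectors not carrying g into those
   carrying g, with x0 itself left over: at most (M-1)/2 vectors miss g. *)
Lemma missing_vectors_bound (g : nat) (x0 : list bool) :
  In x0 V -> carries g x0 = true -> 2 * length (filter (fun u => negb (carries g u)) V) + 1 <= M.
Proof.
  intros Hx0 Hg. pose proof Hx0 as [Hlx0 _]%nonzero_vectors_In.
  pose proof (filter_length (carries g) V) as Hsplit.
  unfold V in Hsplit at 3. rewrite nonzero_vectors_length in Hsplit. fold M in Hsplit.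
  set (C := filter (fun u => negb (carries g u)) V) in *.
  assert (length (x0 :: map (vadd x0) C) <= length (filter (carries g) V)).
  { apply NoDup_incl_length.
    - constructor.
      + intros [c [Hc [HcV _]%filter_In]]%in_map_iff. apply nonzero_vectors_In in HcV.
        apply (vadd_nonzero_neq x0 c); [lia | tauto | exact Hc].
      + apply Injective_map_NoDup_in; [|apply NoDup_filter, nonzero_vectors_NoDup].
        intros a b [Ha _]%filter_In [Hb _]%filter_In E.
        apply nonzero_vectors_In in Ha, Hb.
        rewrite <- (vadd_cancel x0 a), <- (vadd_cancel x0 b), E by lia. reflexivity.
    - intros y [<-|[c [<- [HcV Hc%negb_true_iff]%filter_In]]%in_map_iff]; apply filter_In.
      + split; [exact Hx0 | exact Hg].
      + exact (translate_carries g x0 c Hx0 Hg HcV Hc). }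
  simpl in H. rewrite length_map in H. lia.
Qed.

(* An atom R(x_u, x_v, x_{u+v}) misses g only if u and v both miss g, so at most
   c(c-1) atoms miss g, where c is the number of vectors missing g. *)
Lemma missing_atoms_bound (g : nat) :
  let C := filter (fun u => negb (carries g u)) V in
  length (filter (fun A => negb (inb g (atom_colours L A))) (body (xor_query k))) <=
  length C * (length C - 1).
Proof.
  intros C. simpl. rewrite filter_flat_map, length_flat_map, Nat.mul_comm.
  unfold C. rewrite <- list_sum_map_indicator.
  apply list_sum_map_le. intros u Hu. unfold xor_row. rewrite filter_map_swap, length_map.
  destruct (negb (carries g u)) eqn:Hmu.
  - rewrite <- (filter_neqb_length u (filter (fun u => negb (carries g u)) V));
      [| apply NoDup_filter, nonzero_vectors_NoDup | apply filter_In; auto].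
    apply NoDup_incl_length; [apply NoDup_filter, NoDup_filter, nonzero_vectors_NoDup|].
    intros v [[Hv Huv]%filter_In Hmiss]%filter_In. apply filter_In. split; [|exact Huv].
    apply filter_In. split; [exact Hv|]. apply negb_true_iff.
    destruct (carries g v) eqn:E; [|reflexivity].
    assert (E' : inb g (atom_colours L (xor_atom u v)) = true)
      by (apply inb_true, atom_colours_xor; right; left; apply inb_true, E).
    rewrite E' in Hmiss. discriminate.
  - rewrite (filter_ext_in _ (fun _ => false)), filter_length_const; [reflexivity|].
    intros v _. apply negb_false_iff, inb_true in Hmu.
    apply negb_false_iff, inb_true, atom_colours_xor. auto.
Qed.

Lemma colour_frequency (g : nat) (x0 : list bool) :
  In x0 V -> carries g x0 = true ->
  3 * (M - 1) * (M + 1) <=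
  4 * length (filter (fun A => inb g (atom_colours L A)) (body (xor_query k))).
Proof.
  intros Hx0 Hg.
  pose proof (missing_vectors_bound g x0 Hx0 Hg) as Hc.
  pose proof (missing_atoms_bound g) as Hmiss. simpl in Hmiss.
  pose proof (filter_length (fun A => inb g (atom_colours L A)) (body (xor_query k))) as Hsplit.
  rewrite xor_body_length in Hsplit. fold M in Hsplit.
  set (c := length (filter (fun u => negb (carries g u)) V)) in *.
  set (hits := length (filter (fun A => inb g (atom_colours L A)) (body (xor_query k)))) in *.
  set (miss := length (filter (fun A => negb (inb g (atom_colours L A))) _)) in *.
  pose proof nonzero_count_ge_3 as HM. set (P := M) in *. clearbody c hits miss P.
  destruct P as [|m]; [lia|]. replace (S m - 1) with m in * by lia.
  destruct c as [|c]; [nia|]. replace (S c - 1) with c in * by lia. nia.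
Qed.

(* Double counting the incidences between head colours and atoms: every head colour is
   frequent (colour_frequency), while every atom carries at most denom colours. *)
Lemma colour_ratio_bound :
  ncolors L (Defs.head (xor_query k)) * (3 * 2 ^ k) <= 4 * (2 ^ k - 1) * denom L (xor_query k).
Proof.
  set (G := nodup Nat.eq_dec (flat_map L (Defs.head (xor_query k)))).
  set (B := body (xor_query k)).
  set (hits := fun g => length (filter (fun A => inb g (atom_colours L A)) B)).
  assert (Hlow : length G * (3 * (M - 1) * (M + 1)) <= 4 * list_sum (map hits G)).
  { rewrite <- list_sum_map_scale, Nat.mul_comm, <- list_sum_map_const.
    apply list_sum_map_le. intros g Hg.
    apply nodup_In, in_flat_map in Hg as [x [[e [<- He]]%in_map_iff Hg]].
    apply (colour_frequency g e); [|apply inb_true, Hg].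
    apply nonzero_vectors_In, unit_vectors_prop, He. }
  assert (Hup : list_sum (map hits G) <= length B * denom L (xor_query k)).
  { unfold hits. rewrite <- (double_counting B G (fun A g => inb g (atom_colours L A))).
    rewrite Nat.mul_comm, <- list_sum_map_const. apply list_sum_map_le. intros A HA.
    transitivity (length (atom_colours L A)).
    - apply NoDup_incl_length; [apply NoDup_filter, NoDup_nodup|].
      intros g [_ Hg%inb_true]%filter_In. exact Hg.
    - apply fold_max_ge, in_map_iff. exists A. split; [reflexivity | exact HA]. }
  unfold B in Hup. rewrite xor_body_length in Hup. fold M in Hup.
  unfold ncolors. fold G.
  replace (2 ^ k) with (M + 1) by (unfold M; pose proof (Nat.pow_nonzero 2 k); lia).
  replace (M + 1 - 1) with M by lia.
  pose proof nonzero_count_ge_3 as HM. set (d := denom L (xor_query k)) in *.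
  clearbody G d. set (P := M) in *. clearbody P.
  apply (Nat.mul_le_mono_pos_r _ _ (P - 1)); [lia|]. nia.
Qed.

End ValidColouring.

(* The extremal colouring: x_v gets the set of s in F_2^k with <v,s> = 1. *)
Definition dot_colouring (k : nat) : coloring :=
  fun x => map enc (filter (dot (dec k x)) (vectors k)).

Lemma dot_colouring_In (k : nat) (u : list bool) (c : nat) :
  length u = k ->
  In c (dot_colouring k (enc u)) <-> exists s, c = enc s /\ length s = k /\ dot u s = true.
Proof.
  intros Hu. unfold dot_colouring. rewrite dec_enc by exact Hu. rewrite in_map_iff. split.
  - intros [s [<- [Hs Hd]%filter_In]]. apply vectors_In in Hs. eauto.
  - intros [s [-> [Hs Hd]]]. exists s. split; [reflexivity|]. apply filter_In.
    split; [apply vectors_In, Hs | exact Hd].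
Qed.

(* Validity: <u+v,s> = 1 forces <u,s> = 1 or <v,s> = 1. *)
Lemma dot_colouring_valid (k : nat) : valid_coloring [xor_fd] (xor_query k) (dot_colouring k).
Proof.
  intros X Y [f [A [[<-|[]] [HA [_ [-> ->]]]]]] c Hc.
  apply xor_body_inv in HA as [u [v [Hu [Hv [_ ->]]]]]. simpl in *.
  apply nonzero_vectors_In in Hu as [Hu _], Hv as [Hv _].
  apply dot_colouring_In in Hc as [s [-> [Hs Hd]]]; [|rewrite vadd_length; lia].
  rewrite dot_vadd in Hd by lia.
  destruct (dot u s) eqn:Eu.
  - exists (enc u). split; [left; reflexivity | apply dot_colouring_In; eauto].
  - exists (enc v). split; [right; left; reflexivity | apply dot_colouring_In; eauto].
Qed.

(* Every nonzero s has <e,s> = 1 for some unit vector e, so the head sees all 2^k - 1 colours. *)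
Lemma unit_vector_detects (k : nat) (s : list bool) :
  length s = k -> nonzero s = true -> exists e, In e (unit_vectors k) /\ dot e s = true.
Proof.
  intros Hs Hnz. rewrite <- (dot_unit_vectors k s Hs) in Hnz.
  apply existsb_exists in Hnz as [b [[e [<- He]]%in_map_iff Hb]]. eauto.
Qed.

Lemma dot_colouring_head (k : nat) :
  2 ^ k - 1 <= ncolors (dot_colouring k) (Defs.head (xor_query k)).
Proof.
  rewrite <- nonzero_vectors_length, <- (length_map enc). apply NoDup_incl_length.
  - apply Injective_map_NoDup_in; [|apply nonzero_vectors_NoDup].
    intros a b [Ha _]%nonzero_vectors_In [Hb _]%nonzero_vectors_In. apply enc_inj. lia.
  - intros y [s [<- [Hs Hnz]%nonzero_vectors_In]]%in_map_iff.
    destruct (unit_vector_detects k s Hs Hnz) as [e [He Hd]].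
    apply nodup_In, in_flat_map. exists (enc e). split; [apply in_map, He|].
    apply unit_vectors_prop in He as [He _]. apply dot_colouring_In; eauto.
Qed.

(* An atom R(x_u, x_v, x_{u+v}) sees exactly the s with <u,s> = 1 or <v,s> = 1. *)
Lemma dot_colouring_atom (k : nat) (A : atom) :
  In A (body (xor_query k)) -> ncolors (dot_colouring k) (args A) <= 3 * 2 ^ (k - 2).
Proof.
  intros HA. apply xor_body_inv in HA as [u [v [Hu [Hv [Huv ->]]]]].
  apply nonzero_vectors_In in Hu as [Hu Hnu], Hv as [Hv Hnv].
  pose proof (dot_or_count u v ltac:(lia) Hnu Hnv Huv) as Hcount. rewrite Hu in Hcount.
  rewrite <- Hcount, <- (length_map enc).
  apply NoDup_incl_length; [apply NoDup_nodup|].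
  intros y Hy%nodup_In. simpl in Hy. rewrite !in_app_iff in Hy. simpl in Hy.
  assert (Huv' : length (vadd u v) = k) by (rewrite vadd_length; lia).
  destruct Hy as [Hy|[Hy|[Hy|[]]]].
  - apply dot_colouring_In in Hy as [s [-> [Hs Hd]]]; [|exact Hu].
    apply in_map, filter_In. split; [apply vectors_In; lia | rewrite Hd; reflexivity].
  - apply dot_colouring_In in Hy as [s [-> [Hs Hd]]]; [|exact Hv].
    apply in_map, filter_In. split; [apply vectors_In; lia | rewrite Hd, orb_true_r; reflexivity].
  - apply dot_colouring_In in Hy as [s [-> [Hs Hd]]]; [|exact Huv'].
    apply in_map, filter_In. split; [apply vectors_In; lia|].
    rewrite dot_vadd in Hd by lia. destruct (dot u s), (dot v s); easy.
Qed.

Lemma dot_colouring_denom (k : nat) : denom (dot_colouring k) (xor_query k) <= 3 * 2 ^ (k - 2).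
Proof.
  apply fold_max_le. intros x [A [<- HA]]%in_map_iff. apply dot_colouring_atom, HA.
Qed.

Local Open Scope R_scope.

Lemma nat_ratio_le (a b c d : nat) :
  (a * d <= c * b)%nat -> (0 < b)%nat -> (0 < d)%nat -> INR a / INR b <= INR c / INR d.
Proof.
  intros H Hb Hd. apply le_INR in H. rewrite !mult_INR in H. apply lt_0_INR in Hb, Hd.
  apply (Rmult_le_reg_r (INR b * INR d)); [nra|].
  replace (INR a / INR b * (INR b * INR d)) with (INR a * INR d) by (field; lra).
  replace (INR c / INR d * (INR b * INR d)) with (INR c * INR b) by (field; lra). lra.
Qed.

Lemma xor_color_number (k : nat) :
  (2 <= k)%nat -> exists c, color_number [xor_fd] (xor_query k) c /\ 0 <= c <= 4 / 3.
Proof.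
  intros Hk.
  set (q := (2 ^ (k - 2))%nat).
  assert (Hq : (2 ^ k = 4 * q)%nat)
    by (unfold q; replace k with (S (S (k - 2))) at 1 by lia; simpl; lia).
  assert (Hq1 : (1 <= q)%nat) by (pose proof (Nat.pow_nonzero 2 (k - 2)); lia).
  pose proof (dot_colouring_head k) as Hn0.
  pose proof (dot_colouring_denom k) as Hd0.
  pose proof (colour_ratio_bound k _ (dot_colouring_valid k) Hk) as Hb0.
  fold q in Hd0. rewrite Hq in Hn0, Hb0.
  set (n0 := ncolors (dot_colouring k) (Defs.head (xor_query k))) in *.
  set (d0 := denom (dot_colouring k) (xor_query k)) in *.
  assert (Hd0pos : (0 < d0)%nat) by nia.
  exists (ratio (dot_colouring k) (xor_query k)). split; [split|].
  - exists (dot_colouring k). split; [apply dot_colouring_valid | split; [exact Hd0pos | reflexivity]].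
  - intros L HL HdL. unfold ratio. fold n0 d0.
    pose proof (colour_ratio_bound k L HL Hk) as HbL. rewrite Hq in HbL.
    set (nL := ncolors L _) in *. set (dL := denom L _) in *.
    apply nat_ratio_le; [|exact HdL | exact Hd0pos].
    assert (H1 : (nL * d0 * (12 * q) <= 4 * (4 * q - 1) * dL * d0)%nat) by nia.
    assert (H2 : (4 * (4 * q - 1) * dL * d0 <= n0 * dL * (12 * q))%nat) by nia.
    apply (Nat.mul_le_mono_pos_r _ _ (12 * q)); lia.
  - unfold ratio. fold n0 d0. split.
    + apply Rmult_le_pos; [apply pos_INR | left; apply Rinv_0_lt_compat, lt_0_INR, Hd0pos].
    + replace (4 / 3) with (INR 4 / INR 3) by (simpl; field).
      apply nat_ratio_le; [nia | exact Hd0pos | lia].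
Qed.

(* Since 4^(alpha c) <= 2^(8|alpha|/3) for 0 <= c <= 4/3, the size 2^k of Q_k(D)
   eventually exceeds rmax^(alpha C) = 4^(alpha C). *)
Lemma exponential_beats_bounded_power (alpha : R) :
  exists k, (2 <= k)%nat /\
    forall c, 0 <= c <= 4 / 3 -> Rpower (INR 4) (alpha * c) < INR (2 ^ k).
Proof.
  destruct (INR_unbounded (4 * Rabs alpha)) as [n Hn].
  exists (n + 2)%nat. split; [lia|]. intros c [Hc0 Hc1].
  replace (INR 4) with (Rpower 2 (INR 2)) by (rewrite Rpower_pow by lra; simpl; ring).
  rewrite Rpower_mult, pow_INR, <- Rpower_pow by (simpl; lra). simpl (INR 2).
  apply Rpower_lt; [lra|].
  assert (alpha * c <= Rabs alpha * (4 / 3)).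
  { apply Rle_trans with (Rabs alpha * c).
    - apply Rmult_le_compat_r; [exact Hc0 | apply Rle_abs].
    - apply Rmult_le_compat_l; [apply Rabs_pos | exact Hc1]. }
  rewrite plus_INR. simpl (INR 2). pose proof (Rabs_pos alpha). lra.
Qed.

Theorem theorem4p2 : forall alpha : R,
  exists (ar : nat -> nat) (S : list fd) (Q : cq) (D : database),
    wf_query ar Q /\ wf_db ar D /\ Forall (wf_fd ar) S /\ Forall (fd_sat D) S /\
    exists (Qc : cq) (c : R) (n : nat),
      is_chase S Q Qc /\ color_number S Qc c /\ answer_card Q D n /\
      INR n > Rpower (INR (rmax Q D)) (alpha * c).
Proof.
  intros alpha.
  destruct (exponential_beats_bounded_power alpha) as [k [Hk Hpow]].
  destruct (xor_color_number k Hk) as [c [Hc Hcbound]].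
  exists (fun _ => 3%nat), [xor_fd], (xor_query k), xor_db.
  split; [apply xor_query_wf|]. split; [apply xor_db_wf|].
  split; [constructor; [apply xor_fd_wf | constructor]|].
  split; [constructor; [apply xor_db_sat | constructor]|].
  exists (xor_query k), c, (2 ^ k)%nat.
  split; [split; [apply rt_refl | apply xor_query_chased]|].
  split; [exact Hc|]. split; [apply xor_answers, Hk|].
  rewrite xor_rmax by exact Hk. apply Hpow, Hcbound.
Qed.
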